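(* Let $\beta>0$ and $d,k\in\mathbb{N}$ with $k\ge1$, and suppose $$1\le\beta\le 1+\tfrac12\log\!\Big(\frac{d}{8\max\{2k,28\}}\Big).$$ Let $P^1,\dots,P^d$ be independent samples from $\mathsf{Beta}(\beta,\beta)$. Then $$\mathbb{E}\Big[\max_{s\subset[d]:\,|s|=k}\ \sum_{j\in s}P^j\Big]\ge \frac34 k.$$
   Context: $\mathsf{Beta}(\alpha,\beta)$ is the distribution on $[0,1]$ with density proportional to $p^{\alpha-1}(1-p)^{\beta-1}$. $\log$ denotes the natural logarithm; $[d]=\{1,\dots,d\}$. *)

From Stdlib Require Import Reals List ClassicalEpsilon.
Open Scope R_scope.

(* Real power x^a for x >= 0, a >= 0, with the convention 0^0 = 1 and
   0^a = 0 for a > 0 (Stdlib's Rpower is only meaningful for x > 0). *)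
Definition rpow (x a : R) : R :=
  match Req_EM_T x 0 with
  | left _ => match Req_EM_T a 0 with left _ => 1 | right _ => 0 end
  | right _ => Rpower x a
  end.

(* Riemann integral of f over [a,b]; it is independent of the integrability
   proof (RiemannInt_P5).  For non-integrable f the value is unspecified;
   all integrands used below are continuous on the compact domain. *)
Definition integral (f : R -> R) (a b : R) : R :=
  epsilon (inhabits 0) (fun I => exists pr : Riemann_integrable f a b, RiemannInt pr = I).

Fixpoint iint (n : nat) (g : list R -> R) : R :=
  match n with
  | O => g nil
  | S m => integral (fun x => iint m (fun l => g (x :: l))) 0 1
  end.

Definition beta_fn (b : R) : R :=
  integral (fun p => rpow p (b - 1) * rpow (1 - p) (b - 1)) 0 1.

Definition beta_density (b p : R) : R :=
  rpow p (b - 1) * rpow (1 - p) (b - 1) / beta_fn b.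

(* Expectation of f(P^1,...,P^d) for P^1..P^d i.i.d. Beta(b,b):
   integral over [0,1]^d against the product density. *)
Definition E_beta (b : R) (d : nat) (f : list R -> R) : R :=
  iint d (fun l => f l * fold_right Rmult 1 (map (beta_density b) l)).

Fixpoint subsets (k : nat) (l : list nat) : list (list nat) :=
  match k with
  | O => nil :: nil
  | S k' => match l with
            | nil => nil
            | x :: t => map (cons x) (subsets k' t) ++ subsets k t
            end
  end.

(* Maximum of a list of reals (0 for the empty list). *)
Definition lmax (l : list R) : R :=
  match l with nil => 0 | x :: t => fold_right Rmax x t end.

(* max over s subset of [d] (indices 0..d-1), |s| = k, of sum_{j in s} P^j. *)
Definition topk_max (d k : nat) (P : list R) : R :=
  lmax (map (fun s => fold_right Rplus 0 (map (fun j => nth j P 0) s))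
            (subsets k (seq 0 d))).

From Stdlib Require Import Reals List Lra Lia Sorted.
From Stdlib Require Import ClassicalEpsilon FunctionalExtensionality PropExtensionality.
From Coquelicot Require Import Coquelicot.
Open Scope R_scope.

(* Cut the coordinates into k disjoint blocks of m = d / k >= 15 exp (2 (beta - 1))
   consecutive indices; the indices of the block maxima form a k-subset, so the
   top-k sum dominates the sum of the block maxima.  On [1/2, 19/20] the
   Beta(beta, beta) density is at least exp (-2 (beta - 1)), so one coordinate
   exceeds t with probability q >~ (19/20 - t) exp (-2 (beta - 1)) and a whole
   block stays below t with probability (1 - q)^m <= exp (- m q).  Bounding the
   block maximum below by 13/20 [max >= 13/20] + (21/25 - 13/20) [max >= 21/25]
   then gives an expected block maximum above 3/4.  As the expectation is an
   iterated Riemann integral, the indicators are replaced by continuous ramps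
   and every integrand is kept bounded and uniformly continuous on the cube. *)

Lemma integral_RInt f a b : ex_RInt f a b -> integral f a b = RInt f a b.
Proof.
  intros Hex. unfold integral.
  destruct (epsilon_spec (inhabits 0)
              (fun I => exists pr : Riemann_integrable f a b, RiemannInt pr = I)) as [pr <-].
  { exists (RiemannInt (ex_RInt_Reals_0 _ _ _ Hex)), (ex_RInt_Reals_0 _ _ _ Hex). reflexivity. }
  symmetry. apply RInt_Reals.
Qed.

Lemma integral_ext f g a b : a <= b -> (forall x, a <= x <= b -> f x = g x) ->
  integral f a b = integral g a b.
Proof.
  intros Hab.
  assert (transfer : forall f g, (forall x, a <= x <= b -> f x = g x) -> forall I,
            (exists pr : Riemann_integrable f a b, RiemannInt pr = I) ->
            exists pr : Riemann_integrable g a b, RiemannInt pr = I).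
  { intros f' g' Hfg I [pr <-].
    assert (Hfg' : forall x, Rmin a b <= x <= Rmax a b -> f' x = g' x)
      by (rewrite Rmin_left, Rmax_right by lra; exact Hfg).
    exists (Riemann_integrable_ext _ _ _ _ Hfg' pr). rewrite <- !RInt_Reals.
    apply RInt_ext. rewrite Rmin_left, Rmax_right by lra. intros x Hx; symmetry; apply Hfg; lra. }
  intros Hfg. unfold integral. f_equal. apply functional_extensionality; intros I.
  apply propositional_extensionality; split; apply transfer; [exact Hfg|].
  intros x Hx; symmetry; auto.
Qed.

Lemma integral_const c a b : integral (fun _ => c) a b = (b - a) * c.
Proof. rewrite integral_RInt by apply ex_RInt_const. rewrite RInt_const. reflexivity. Qed.

Lemma integral_plus f g a b : ex_RInt f a b -> ex_RInt g a b ->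
  integral (fun x => f x + g x) a b = integral f a b + integral g a b.
Proof.
  intros Hf Hg. rewrite !integral_RInt; auto.
  - exact (RInt_plus f g a b Hf Hg).
  - exact (ex_RInt_plus f g a b Hf Hg).
Qed.

Lemma integral_scal c f a b : ex_RInt f a b ->
  integral (fun x => c * f x) a b = c * integral f a b.
Proof.
  intros Hf. rewrite !integral_RInt; auto.
  - exact (RInt_scal f a b c Hf).
  - exact (ex_RInt_scal f a b c Hf).
Qed.

Lemma integral_le f g a b : a <= b -> ex_RInt f a b -> ex_RInt g a b ->
  (forall x, a <= x <= b -> f x <= g x) -> integral f a b <= integral g a b.
Proof.
  intros Hab Hf Hg H. rewrite !integral_RInt by auto.
  apply RInt_le; auto. intros; apply H; lra.
Qed.

Section BoundedUniformlyContinuous.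

Context {X : Type} (D : X -> Prop) (near : R -> X -> X -> Prop).

Definition bounded_uc (F : X -> R) : Prop :=
  (exists M, forall x, D x -> Rabs (F x) <= M) /\
  (forall eps, 0 < eps -> exists del, 0 < del /\
     forall x y, D x -> D y -> near del x y -> Rabs (F x - F y) <= eps).

Hypothesis near_mono : forall del del' x y, del <= del' -> near del x y -> near del' x y.

Lemma bounded_uc_const c : bounded_uc (fun _ => c).
Proof.
  split; [exists (Rabs c); intros; lra|].
  intros eps Heps; exists 1; split; [lra|]; intros.
  rewrite Rminus_diag, Rabs_R0; lra.
Qed.

Lemma bounded_uc_ext F G : (forall x, D x -> F x = G x) -> bounded_uc F -> bounded_uc G.
Proof.
  intros E [[M HM] H]. split.
  - exists M; intros x Hx; rewrite <- E; auto.
  - intros eps Heps; destruct (H eps Heps) as [del [Hdel H']]; exists del; split; auto.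
    intros x y Hx Hy Hxy; rewrite <- !E; auto.
Qed.

Lemma bounded_uc_plus F G : bounded_uc F -> bounded_uc G -> bounded_uc (fun x => F x + G x).
Proof.
  intros [[M1 HM1] H1] [[M2 HM2] H2]. split.
  - exists (M1 + M2); intros x Hx. eapply Rle_trans; [apply Rabs_triang|].
    apply Rplus_le_compat; auto.
  - intros eps Heps.
    destruct (H1 (eps/2)) as [d1 [Hd1 K1]]; [lra|].
    destruct (H2 (eps/2)) as [d2 [Hd2 K2]]; [lra|].
    exists (Rmin d1 d2); split; [apply Rmin_pos; auto|]. intros x y Hx Hy Hxy.
    specialize (K1 x y Hx Hy (near_mono _ _ _ _ (Rmin_l d1 d2) Hxy)).
    specialize (K2 x y Hx Hy (near_mono _ _ _ _ (Rmin_r d1 d2) Hxy)).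
    replace (F x + G x - (F y + G y)) with ((F x - F y) + (G x - G y)) by ring.
    eapply Rle_trans; [apply Rabs_triang|lra].
Qed.

Lemma bounded_uc_mult F G : bounded_uc F -> bounded_uc G -> bounded_uc (fun x => F x * G x).
Proof.
  intros [[M1 HM1] H1] [[M2 HM2] H2]. split.
  - exists (M1 * M2); intros x Hx. rewrite Rabs_mult.
    apply Rmult_le_compat; auto using Rabs_pos.
  - intros eps Heps.
    set (A1 := Rabs M1 + 1). set (A2 := Rabs M2 + 1).
    assert (PA1 : 0 < A1) by (unfold A1; generalize (Rabs_pos M1); lra).
    assert (PA2 : 0 < A2) by (unfold A2; generalize (Rabs_pos M2); lra).
    destruct (H1 (eps / 2 / A2)) as [d1 [Hd1 K1]]; [apply Rdiv_lt_0_compat; lra|].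
    destruct (H2 (eps / 2 / A1)) as [d2 [Hd2 K2]]; [apply Rdiv_lt_0_compat; lra|].
    exists (Rmin d1 d2); split; [apply Rmin_pos; auto|]. intros x y Hx Hy Hxy.
    specialize (K1 x y Hx Hy (near_mono _ _ _ _ (Rmin_l d1 d2) Hxy)).
    specialize (K2 x y Hx Hy (near_mono _ _ _ _ (Rmin_r d1 d2) Hxy)).
    assert (E1 : Rabs (F x) <= A1)
      by (specialize (HM1 x Hx); unfold A1; generalize (Rle_abs M1); lra).
    assert (E2 : Rabs (G y) <= A2)
      by (specialize (HM2 y Hy); unfold A2; generalize (Rle_abs M2); lra).
    replace (F x * G x - F y * G y) with (F x * (G x - G y) + G y * (F x - F y)) by ring.
    eapply Rle_trans; [apply Rabs_triang|]. rewrite !Rabs_mult.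
    assert (Rabs (F x) * Rabs (G x - G y) <= A1 * (eps / 2 / A1))
      by (apply Rmult_le_compat; auto using Rabs_pos).
    assert (Rabs (G y) * Rabs (F x - F y) <= A2 * (eps / 2 / A2))
      by (apply Rmult_le_compat; auto using Rabs_pos).
    replace (A1 * (eps / 2 / A1)) with (eps / 2) in * by (field; lra).
    replace (A2 * (eps / 2 / A2)) with (eps / 2) in * by (field; lra).
    lra.
Qed.

Lemma bounded_uc_scal c F : bounded_uc F -> bounded_uc (fun x => c * F x).
Proof. intros; apply bounded_uc_mult; auto using bounded_uc_const. Qed.

End BoundedUniformlyContinuous.

Definition unit_interval (x : R) : Prop := 0 <= x <= 1.

Definition uc01 : (R -> R) -> Prop := bounded_uc unit_interval (fun del x y => Rabs (x - y) < del).

Lemma uc01_plus f g : uc01 f -> uc01 g -> uc01 (fun x => f x + g x).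
Proof. apply bounded_uc_plus. intros; lra. Qed.

Lemma uc01_mult f g : uc01 f -> uc01 g -> uc01 (fun x => f x * g x).
Proof. apply bounded_uc_mult. intros; lra. Qed.

Lemma uc01_scal c f : uc01 f -> uc01 (fun x => c * f x).
Proof. apply bounded_uc_scal. intros; lra. Qed.

(* Extending a function on [0,1] by [f o clamp] lets us use the global continuity
   lemmas of the libraries. *)
Definition clamp (x : R) : R := Rmax 0 (Rmin x 1).

Lemma clamp_range x : unit_interval (clamp x).
Proof. unfold unit_interval, clamp, Rmax, Rmin; repeat destruct Rle_dec; lra. Qed.

Lemma clamp_id x : unit_interval x -> clamp x = x.
Proof. unfold unit_interval, clamp, Rmax, Rmin; repeat destruct Rle_dec; lra. Qed.

Lemma clamp_lipschitz x y : Rabs (clamp x - clamp y) <= Rabs (x - y).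
Proof. unfold clamp, Rmax, Rmin; repeat destruct Rle_dec; split_Rabs; lra. Qed.

Lemma uc01_ex_RInt f : uc01 f -> ex_RInt f 0 1.
Proof.
  intros [_ Hu].
  apply ex_RInt_ext with (fun y => f (clamp y)).
  { rewrite Rmin_left, Rmax_right by lra.
    intros x Hx. rewrite clamp_id; unfold unit_interval; lra. }
  apply (@ex_RInt_continuous R_CompleteNormedModule). intros z _.
  apply continuity_pt_filterlim.
  unfold continuity_pt, continue_in, limit1_in, limit_in; simpl; unfold R_dist.
  intros eps Heps. destruct (Hu (eps / 2)) as [del [Hdel H]]; [lra|].
  exists del; split; [lra|]. intros y [_ Hy].
  apply Rle_lt_trans with (eps / 2); [|lra].
  apply H; try apply clamp_range.
  eapply Rle_lt_trans; [apply clamp_lipschitz|exact Hy].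
Qed.

Lemma uc01_of_continuous f M : (forall y, continuity_pt (fun z => f (clamp z)) y) ->
  (forall x, unit_interval x -> Rabs (f x) <= M) -> uc01 f.
Proof.
  intros Hc HM. split; [exists M; auto|]. intros eps Heps.
  destruct (Heine (fun z => f (clamp z)) unit_interval (compact_P3 0 1) (fun x _ => Hc x)
              (mkposreal eps Heps)) as [[del Hdel] H].
  exists del; split; auto. intros x y Hx Hy Hxy.
  specialize (H x y Hx Hy Hxy). simpl in H. rewrite !clamp_id in H by auto. lra.
Qed.

Definition in_cube (n : nat) (l : list R) : Prop :=
  List.length l = n /\ List.Forall unit_interval l.

Definition close (del : R) (l l' : list R) : Prop :=
  List.Forall2 (fun x y => Rabs (x - y) < del) l l'.

Definition uc_cube (n : nat) : (list R -> R) -> Prop := bounded_uc (in_cube n) close.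

Lemma close_mono del del' l l' : del <= del' -> close del l l' -> close del' l l'.
Proof. intros Hdel H. eapply Forall2_impl; [|exact H]. simpl; intros; lra. Qed.

Lemma close_refl del l : 0 < del -> close del l l.
Proof. intros Hdel; induction l; constructor; auto. rewrite Rminus_diag, Rabs_R0; lra. Qed.

Lemma in_cube_cons n x l : unit_interval x -> in_cube n l -> in_cube (S n) (x :: l).
Proof. intros Hx [Hlen Hl]; split; simpl; auto. Qed.

Lemma in_cube_S_inv n l : in_cube (S n) l ->
  exists x t, l = x :: t /\ unit_interval x /\ in_cube n t.
Proof.
  intros [Hlen Hl]. destruct l as [|x t]; [discriminate|].
  inversion Hl; subst. exists x, t; split; [reflexivity|]. split; [assumption|].
  split; [simpl in Hlen; lia|assumption].
Qed.

Lemma nth_in_cube n l j : in_cube n l -> unit_interval (nth j l 0).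
Proof.
  intros [_ H]. revert j; induction H; intros j; destruct j; simpl; auto;
    unfold unit_interval; lra.
Qed.

Lemma uc_cube_plus n F G : uc_cube n F -> uc_cube n G -> uc_cube n (fun l => F l + G l).
Proof. apply bounded_uc_plus, close_mono. Qed.

Lemma uc_cube_mult n F G : uc_cube n F -> uc_cube n G -> uc_cube n (fun l => F l * G l).
Proof. apply bounded_uc_mult, close_mono. Qed.

Lemma uc_cube_scal n c F : uc_cube n F -> uc_cube n (fun l => c * F l).
Proof. apply bounded_uc_scal, close_mono. Qed.

Lemma uc_cube_section n F x : uc_cube (S n) F -> unit_interval x ->
  uc_cube n (fun l => F (x :: l)).
Proof.
  intros [[M HM] H] Hx. split.
  - exists M; intros l Hl; apply HM, in_cube_cons; auto.
  - intros eps Heps; destruct (H eps Heps) as [del [Hdel H']]; exists del; split; auto.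
    intros l l' Hl Hl' Hll'; apply H'; try apply in_cube_cons; auto.
    constructor; auto. rewrite Rminus_diag, Rabs_R0; lra.
Qed.

Lemma uc_cube_hd n f : uc01 f -> uc_cube (S n) (fun l => f (hd 0 l)).
Proof.
  intros [[M HM] H]. split.
  - exists M; intros l Hl. destruct (in_cube_S_inv _ _ Hl) as [x [t [-> [Hx _]]]]. auto.
  - intros eps Heps; destruct (H eps Heps) as [del [Hdel H']]; exists del; split; auto.
    intros l l' Hl Hl' Hll'.
    destruct (in_cube_S_inv _ _ Hl) as [x [t [-> [Hx _]]]].
    destruct (in_cube_S_inv _ _ Hl') as [x' [t' [-> [Hx' _]]]].
    inversion Hll'; auto.
Qed.

Lemma uc_cube_tl n F : uc_cube n F -> uc_cube (S n) (fun l => F (tl l)).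
Proof.
  intros [[M HM] H]. split.
  - exists M; intros l Hl. destruct (in_cube_S_inv _ _ Hl) as [x [t [-> [_ Ht]]]]. auto.
  - intros eps Heps; destruct (H eps Heps) as [del [Hdel H']]; exists del; split; auto.
    intros l l' Hl Hl' Hll'.
    destruct (in_cube_S_inv _ _ Hl) as [x [t [-> [_ Ht]]]].
    destruct (in_cube_S_inv _ _ Hl') as [x' [t' [-> [_ Ht']]]].
    inversion Hll'; auto.
Qed.

Lemma iint_const n c : iint n (fun _ => c) = c.
Proof.
  induction n; simpl; auto.
  rewrite (integral_ext _ (fun _ => c)) by (intros; auto; lra).
  rewrite integral_const; ring.
Qed.

Lemma iint_ext n F G : (forall l, in_cube n l -> F l = G l) -> iint n F = iint n G.
Proof.
  revert F G; induction n; intros F G H; simpl.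
  - apply H; split; simpl; auto.
  - apply integral_ext; [lra|]. intros x Hx.
    apply IHn. intros l Hl; apply H, in_cube_cons; auto.
Qed.

(* Linearity and monotonicity of [iint n] have to be proved together: the
   integrability of the sections in dimension [S n] rests on both in dimension [n]. *)
Definition iint_linear_monotone (n : nat) : Prop :=
  forall F, uc_cube n F ->
    (forall c, iint n (fun l => c * F l) = c * iint n F) /\
    (forall G, uc_cube n G -> iint n (fun l => F l + G l) = iint n F + iint n G) /\
    (forall G, uc_cube n G -> (forall l, in_cube n l -> G l <= F l) -> iint n G <= iint n F).

Lemma iint_dist_le n F G eps : iint_linear_monotone n -> uc_cube n F -> uc_cube n G ->
  (forall l, in_cube n l -> Rabs (F l - G l) <= eps) -> Rabs (iint n F - iint n G) <= eps.
Proof.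
  intros Hn HF HG H.
  assert (shifted_le : forall F G, uc_cube n F -> uc_cube n G ->
            (forall l, in_cube n l -> Rabs (F l - G l) <= eps) -> iint n F <= iint n G + eps).
  { clear F G HF HG H. intros F G HF HG H.
    assert (HGe : uc_cube n (fun l => G l + eps))
      by (apply uc_cube_plus; [exact HG|apply bounded_uc_const]).
    destruct (Hn _ HG) as [_ [Hplus _]]. destruct (Hn _ HGe) as [_ [_ Hle]].
    rewrite <- (iint_const n eps), <- Hplus by apply bounded_uc_const.
    apply Hle; auto. intros l Hl. specialize (H l Hl). apply Rabs_le_between in H. lra. }
  apply Rabs_le_between. split.
  - enough (iint n G <= iint n F + eps) by lra.
    apply shifted_le; auto. intros l Hl; rewrite Rabs_minus_sym; auto.
  - enough (iint n F <= iint n G + eps) by lra. apply shifted_le; auto.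
Qed.

Lemma uc01_iint_section n F : iint_linear_monotone n -> uc_cube (S n) F ->
  uc01 (fun x => iint n (fun l => F (x :: l))).
Proof.
  intros Hn HF. pose proof HF as [[M HM] H]. split.
  - exists M. intros x Hx. rewrite <- (Rminus_0_r (iint _ _)), <- (iint_const n 0).
    apply iint_dist_le; [exact Hn|apply uc_cube_section; auto|apply bounded_uc_const|].
    intros l Hl. rewrite Rminus_0_r. apply HM, in_cube_cons; auto.
  - intros eps Heps. destruct (H eps Heps) as [del [Hdel H']].
    exists del; split; auto. intros x y Hx Hy Hxy.
    apply iint_dist_le; [exact Hn|apply uc_cube_section; auto..|]. intros l Hl.
    apply H'; try apply in_cube_cons; auto. constructor; auto. apply close_refl; auto.
Qed.

Lemma iint_linear_monotone_all n : iint_linear_monotone n.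
Proof.
  induction n as [|n IHn].
  - intros F HF; simpl; repeat split; try reflexivity.
    intros G _ Hle. apply Hle. split; [reflexivity|constructor].
  - intros F HF. pose proof (uc01_ex_RInt _ (uc01_iint_section n F IHn HF)) as EF.
    simpl. repeat split.
    + intros c. rewrite <- integral_scal by auto. apply integral_ext; [lra|]. intros x Hx.
      apply (IHn _ (uc_cube_section _ _ _ HF Hx)).
    + intros G HG. pose proof (uc01_ex_RInt _ (uc01_iint_section n G IHn HG)) as EG.
      rewrite <- integral_plus by auto. apply integral_ext; [lra|]. intros x Hx.
      apply (IHn _ (uc_cube_section _ _ _ HF Hx)). apply uc_cube_section; auto.
    + intros G HG Hle. pose proof (uc01_ex_RInt _ (uc01_iint_section n G IHn HG)) as EG.
      apply integral_le; auto; [lra|]. intros x Hx.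
      apply (IHn _ (uc_cube_section _ _ _ HF Hx)). apply uc_cube_section; auto.
      intros l Hl; apply Hle, in_cube_cons; auto.
Qed.

Lemma iint_scal n F c : uc_cube n F -> iint n (fun l => c * F l) = c * iint n F.
Proof. intros H; apply (iint_linear_monotone_all n F H). Qed.

Lemma iint_plus n F G : uc_cube n F -> uc_cube n G ->
  iint n (fun l => F l + G l) = iint n F + iint n G.
Proof. intros H; apply (iint_linear_monotone_all n F H). Qed.

Lemma iint_le n F G : uc_cube n F -> uc_cube n G ->
  (forall l, in_cube n l -> F l <= G l) -> iint n F <= iint n G.
Proof. intros HF HG; apply (iint_linear_monotone_all n G HG); auto. Qed.

Fixpoint coord_prod (g : nat -> R -> R) (l : list R) : R :=
  match l with
  | nil => 1
  | x :: t => g O x * coord_prod (fun i => g (S i)) t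
  end.

Fixpoint prod_upto (c : nat -> R) (n : nat) : R :=
  match n with
  | O => 1
  | S n' => c O * prod_upto (fun i => c (S i)) n'
  end.

Lemma fold_right_map_Rmult f l : fold_right Rmult 1 (map f l) = coord_prod (fun _ => f) l.
Proof. induction l; simpl; congruence. Qed.

Lemma coord_prod_ext g g' l : (forall i x, g i x = g' i x) -> coord_prod g l = coord_prod g' l.
Proof. revert g g'; induction l; intros g g' H; simpl; auto. rewrite H; f_equal; auto. Qed.

Lemma coord_prod_mult g g' l :
  coord_prod g l * coord_prod g' l = coord_prod (fun i x => g i x * g' i x) l.
Proof.
  revert g g'; induction l; intros g g'; simpl; [ring|].
  rewrite <- (IHl (fun i => g (S i)) (fun i => g' (S i))). ring.
Qed.

Lemma coord_prod_nonneg g l : (forall i x, unit_interval x -> 0 <= g i x) ->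
  List.Forall unit_interval l -> 0 <= coord_prod g l.
Proof.
  intros Hg Hl; revert g Hg; induction Hl; intros g Hg; simpl; [lra|].
  apply Rmult_le_pos; auto.
Qed.

Lemma coord_prod_range g l : (forall i x, unit_interval x -> unit_interval (g i x)) ->
  List.Forall unit_interval l -> unit_interval (coord_prod g l).
Proof.
  unfold unit_interval. intros Hg Hl; revert g Hg; induction Hl; intros g Hg; simpl; [lra|].
  destruct (Hg O x H). destruct (IHHl (fun i => g (S i))); auto.
  split; [apply Rmult_le_pos; lra|]. rewrite <- (Rmult_1_r 1). apply Rmult_le_compat; lra.
Qed.

Lemma coord_prod_eq_1 g l : (forall i, (i < List.length l)%nat -> g i (nth i l 0) = 1) ->
  coord_prod g l = 1.
Proof.
  revert g; induction l as [|x l IHl]; intros g H; simpl; auto.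
  pose proof (H O) as Hx. simpl in Hx. rewrite Hx by lia. rewrite IHl; [ring|].
  intros i Hi. apply (H (S i)). simpl; lia.
Qed.

Lemma uc_cube_coord_prod n g : (forall i, uc01 (g i)) -> uc_cube n (coord_prod g).
Proof.
  revert g; induction n as [|n IHn]; intros g Hg.
  - apply bounded_uc_ext with (fun _ => 1); [|apply bounded_uc_const].
    intros l [Hlen _]. destruct l; [reflexivity|discriminate].
  - apply bounded_uc_ext with (fun l => g O (hd 0 l) * coord_prod (fun i => g (S i)) (tl l)).
    { intros l Hl. destruct (in_cube_S_inv _ _ Hl) as [x [t [-> _]]]. reflexivity. }
    apply uc_cube_mult; [apply uc_cube_hd|apply uc_cube_tl, IHn]; auto.
Qed.

Lemma iint_coord_prod n g : (forall i, uc01 (g i)) ->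
  iint n (coord_prod g) = prod_upto (fun i => integral (g i) 0 1) n.
Proof.
  revert g; induction n as [|n IHn]; intros g Hg; simpl; auto.
  rewrite <- (IHn (fun i => g (S i))) by auto.
  rewrite (integral_ext _ (fun x => iint n (coord_prod (fun i => g (S i))) * g O x)) by
    (try lra; intros x Hx; rewrite iint_scal by (apply uc_cube_coord_prod; auto); ring).
  rewrite integral_scal by (apply uc01_ex_RInt; auto). ring.
Qed.

Lemma prod_upto_ext c c' n : (forall i, c i = c' i) -> prod_upto c n = prod_upto c' n.
Proof. revert c c'; induction n; intros c c' H; simpl; auto. rewrite H; f_equal; auto. Qed.

Lemma prod_upto_1 c n : (forall i, c i = 1) -> prod_upto c n = 1.
Proof. revert c; induction n; intros c H; simpl; auto. rewrite H, IHn; auto; ring. Qed.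

Lemma prod_upto_range_indicator A lo m n : (lo + m <= n)%nat ->
  prod_upto (fun i => if andb (lo <=? i)%nat (i <? lo + m)%nat then A else 1) n = A ^ m.
Proof.
  revert n; induction lo as [|lo IHlo]; intros n Hn.
  - revert n Hn; induction m as [|m IHm]; intros n Hn.
    + apply prod_upto_1; intros i. destruct (Nat.ltb_spec i 0); [lia|].
      rewrite Bool.andb_false_r; auto.
    + destruct n; [lia|]. simpl. rewrite <- (IHm n) by lia. reflexivity.
  - destruct n; [lia|]. simpl. rewrite Rmult_1_l, <- (IHlo n) by lia. reflexivity.
Qed.

Lemma subsets_length k l s : In s (subsets k l) -> List.length s = k.
Proof.
  revert k s; induction l; intros k s H; destruct k; simpl in H.
  - destruct H as [<-|[]]; auto.
  - destruct H.
  - destruct H as [<-|[]]; auto.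
  - apply in_app_or in H. destruct H as [H|H].
    + apply in_map_iff in H. destruct H as [s' [<- Hs']]. simpl. f_equal. apply IHl; auto.
    + apply IHl; auto.
Qed.

Lemma In_subsets_seq len : forall lo k s, StronglySorted lt s -> List.length s = k ->
  List.Forall (fun j => (lo <= j < lo + len)%nat) s -> In s (subsets k (seq lo len)).
Proof.
  induction len as [|len IHlen]; intros lo k s Hs Hlen Hrange.
  - destruct s as [|x s]; [simpl in Hlen; subst; simpl; auto|].
    inversion Hrange; lia.
  - destruct k as [|k].
    + destruct s; [simpl; auto|discriminate].
    + destruct s as [|x s]; [discriminate|]. injection Hlen as Hlen.
      destruct (StronglySorted_inv Hs) as [Hs' Hgt].
      inversion Hrange as [|? ? Hx Hrange']; subst.
      rewrite Forall_forall in Hgt, Hrange'.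
      simpl. apply in_or_app. destruct (Nat.eq_dec x lo) as [->|Hne].
      * left. apply in_map, IHlen; auto. rewrite Forall_forall.
        intros j Hj. specialize (Hgt j Hj). specialize (Hrange' j Hj). lia.
      * right. apply IHlen; auto. constructor; [lia|]. rewrite Forall_forall.
        intros j Hj. specialize (Hgt j Hj). specialize (Hrange' j Hj). lia.
Qed.

Lemma lmax_ge L y : In y L -> y <= lmax L.
Proof.
  destruct L as [|a t]; [intros []|]. simpl. revert y.
  induction t as [|b t IHt]; simpl; intros y H.
  - destruct H as [<-|[]]; lra.
  - destruct H as [<-|[<-|H]]; try apply Rmax_l;
      eapply Rle_trans; [apply IHt; simpl; auto|apply Rmax_r|apply IHt; simpl; auto|apply Rmax_r].
Qed.

Lemma lmax_map_lipschitz {X} (f g : X -> R) S eps : 0 <= eps ->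
  (forall s, In s S -> Rabs (f s - g s) <= eps) -> Rabs (lmax (map f S) - lmax (map g S)) <= eps.
Proof.
  intros Heps H. destruct S as [|x t]; simpl.
  - rewrite Rminus_diag, Rabs_R0; auto.
  - induction t as [|a t IHt]; simpl; [apply H; simpl; auto|].
    assert (Ha : Rabs (f a - g a) <= eps) by (apply H; simpl; auto).
    assert (IH : Rabs (fold_right Rmax (f x) (map f t) - fold_right Rmax (g x) (map g t)) <= eps)
      by (apply IHt; intros s Hs; apply H; simpl in *; tauto).
    revert IH. generalize (fold_right Rmax (f x) (map f t)) (fold_right Rmax (g x) (map g t)).
    intros u v Huv. apply Rabs_le_between in Ha; apply Rabs_le_between in Huv.
    apply Rabs_le_between. unfold Rmax; repeat destruct Rle_dec; lra.
Qed.

Lemma lmax_map_0 {X} (S : list X) : lmax (map (fun _ => 0) S) = 0.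
Proof.
  destruct S as [|x t]; simpl; auto.
  induction t; simpl; auto. rewrite IHt. apply Rmax_left; lra.
Qed.

Definition sum_at (P : list R) (s : list nat) : R :=
  fold_right Rplus 0 (map (fun j => nth j P 0) s).

Lemma sum_at_lipschitz P P' s eps :
  (forall j, Rabs (nth j P 0 - nth j P' 0) <= eps) ->
  Rabs (sum_at P s - sum_at P' s) <= INR (List.length s) * eps.
Proof.
  intros H. induction s as [|a s IHs].
  - unfold sum_at; simpl. rewrite Rminus_diag, Rabs_R0; lra.
  - change (List.length (a :: s)) with (S (List.length s)). rewrite S_INR.
    unfold sum_at; simpl; fold (sum_at P s) (sum_at P' s).
    replace (nth a P 0 + sum_at P s - (nth a P' 0 + sum_at P' s)) with
      ((nth a P 0 - nth a P' 0) + (sum_at P s - sum_at P' s)) by ring.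
    eapply Rle_trans; [apply Rabs_triang|]. specialize (H a). lra.
Qed.

Lemma nth_close del l l' j : 0 <= del -> close del l l' -> Rabs (nth j l 0 - nth j l' 0) <= del.
Proof.
  intros Hdel H. revert j; induction H; intros j; destruct j; simpl; auto; try lra.
  all: rewrite Rminus_diag, Rabs_R0; auto.
Qed.

Lemma topk_max_sum_at d k P : topk_max d k P = lmax (map (sum_at P) (subsets k (seq 0 d))).
Proof. reflexivity. Qed.

Lemma topk_max_nil d k : topk_max d k nil = 0.
Proof.
  rewrite topk_max_sum_at, <- (lmax_map_0 (subsets k (seq 0 d))). f_equal. apply map_ext.
  intros s. induction s as [|j s IHs]; [reflexivity|].
  change (sum_at nil (j :: s)) with (nth j nil 0 + sum_at nil s).
  rewrite IHs. destruct j; simpl; ring.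
Qed.

Lemma uc_cube_topk_max d k : (1 <= k)%nat -> uc_cube d (topk_max d k).
Proof.
  intros Hk. assert (Hk' : 0 < INR k) by (apply lt_0_INR; lia).
  assert (Hlip : forall l l' eps, 0 <= eps ->
            (forall j, Rabs (nth j l 0 - nth j l' 0) <= eps) ->
            Rabs (topk_max d k l - topk_max d k l') <= INR k * eps).
  { intros l l' eps Heps H. rewrite !topk_max_sum_at. apply lmax_map_lipschitz; [nra|].
    intros s Hs. rewrite <- (subsets_length _ _ _ Hs). apply sum_at_lipschitz; auto. }
  split.
  - exists (INR k * 1). intros l Hl.
    rewrite <- (Rminus_0_r (topk_max d k l)), <- (topk_max_nil d k).
    apply Hlip; [lra|]. intros j. replace (nth j nil 0) with 0 by (destruct j; reflexivity).
    destruct (nth_in_cube _ _ j Hl). rewrite Rminus_0_r, Rabs_right; lra.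
  - intros eps Heps. exists (eps / INR k); split; [apply Rdiv_lt_0_compat; auto|].
    intros l l' _ _ Hll'. replace eps with (INR k * (eps / INR k)) by (field; lra).
    apply Hlip; [apply Rlt_le, Rdiv_lt_0_compat; auto|].
    intros j; apply nth_close; auto. apply Rlt_le, Rdiv_lt_0_compat; auto.
Qed.

Lemma sum_at_le_topk_max d k l s : StronglySorted lt s -> List.length s = k ->
  List.Forall (fun j => (j < d)%nat) s -> sum_at l s <= topk_max d k l.
Proof.
  intros Hs Hlen Hrange. rewrite topk_max_sum_at. apply lmax_ge, in_map, In_subsets_seq; auto.
  eapply Forall_impl; [|exact Hrange]. simpl; lia.
Qed.

Definition ramp (t x : R) : R := clamp ((x - t) * 100).

Lemma ramp_range t x : unit_interval (ramp t x).
Proof. apply clamp_range. Qed.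

Lemma ramp_below t x : x < t -> ramp t x = 0.
Proof. intros H. unfold ramp, clamp, Rmax, Rmin; repeat destruct Rle_dec; lra. Qed.

Lemma ramp_above t x : t + / 100 <= x -> ramp t x = 1.
Proof. intros H. unfold ramp, clamp, Rmax, Rmin; repeat destruct Rle_dec; lra. Qed.

Lemma uc01_ramp t : uc01 (ramp t).
Proof.
  split; [exists 1; intros x _; destruct (ramp_range t x); rewrite Rabs_right; lra|].
  intros eps Heps. exists (eps / 100); split; [lra|]. intros x y _ _ Hxy.
  eapply Rle_trans; [apply clamp_lipschitz|].
  replace ((x - t) * 100 - (y - t) * 100) with ((x - y) * 100) by ring.
  rewrite Rabs_mult, (Rabs_right 100); lra.
Qed.

Definition in_block (m b i : nat) : bool := andb (b * m <=? i) (i <? b * m + m).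

Lemma in_block_spec m b i : in_block m b i = true <-> (b * m <= i < b * m + m)%nat.
Proof. unfold in_block. rewrite Bool.andb_true_iff, Nat.leb_le, Nat.ltb_lt. tauto. Qed.

(* A continuous stand-in for the indicator that block [b] has a coordinate [>= t]
   (it is [1] if some coordinate is [>= t + 1/100] and [0] if all are [< t]);
   continuity keeps the integrands Riemann integrable. *)
Definition block_hit (t : R) (m b : nat) (l : list R) : R :=
  1 - coord_prod (fun i x => if in_block m b i then 1 - ramp t x else 1) l.

Lemma block_hit_range t m b d l : in_cube d l -> unit_interval (block_hit t m b l).
Proof.
  intros [_ Hl]. unfold block_hit.
  assert (H : unit_interval (coord_prod (fun i x => if in_block m b i then 1 - ramp t x else 1) l)).
  { apply coord_prod_range; auto. intros i x _. unfold unit_interval.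
    destruct (in_block m b i); [destruct (ramp_range t x)|]; lra. }
  unfold unit_interval in *; lra.
Qed.

Lemma block_hit_eq_0 t m b l : (forall j, in_block m b j = true -> nth j l 0 < t) ->
  block_hit t m b l = 0.
Proof.
  intros H. unfold block_hit. rewrite coord_prod_eq_1; [ring|]. intros i _.
  destruct (in_block m b i) eqn:E; auto. rewrite ramp_below; auto; ring.
Qed.

Definition block_score (t1 t2 : R) (m b : nat) (l : list R) : R :=
  t1 * block_hit t1 m b l + (t2 - t1) * block_hit t2 m b l.

Lemma block_score_le_max t1 t2 m b d l i : 0 <= t1 <= t2 -> in_cube d l ->
  (forall j, in_block m b j = true -> nth j l 0 <= nth i l 0) ->
  block_score t1 t2 m b l <= nth i l 0.
Proof.
  intros Ht Hl Hmax. unfold block_score.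
  destruct (block_hit_range t1 m b d l Hl), (block_hit_range t2 m b d l Hl).
  destruct (nth_in_cube d l i Hl).
  destruct (Rlt_le_dec (nth i l 0) t2) as [Hi2|]; [|nra].
  rewrite (block_hit_eq_0 t2) by (intros j Hj; specialize (Hmax j Hj); lra).
  destruct (Rlt_le_dec (nth i l 0) t1) as [Hi1|]; [|nra].
  rewrite (block_hit_eq_0 t1) by (intros j Hj; specialize (Hmax j Hj); lra).
  lra.
Qed.

Lemma argmax_range (f : nat -> R) lo m : (1 <= m)%nat ->
  exists i, (lo <= i < lo + m)%nat /\ forall j, (lo <= j < lo + m)%nat -> f j <= f i.
Proof.
  induction m as [|m IHm]; intros Hm; [lia|].
  destruct (Nat.eq_dec m 0) as [->|Hm0].
  { exists lo; split; [lia|]. intros j Hj. replace j with lo by lia. lra. }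
  destruct IHm as [i [Hi Hmax]]; [lia|].
  destruct (Rle_lt_dec (f (lo + m)%nat) (f i)).
  - exists i; split; [lia|]. intros j Hj.
    destruct (Nat.eq_dec j (lo + m)) as [->|]; auto. apply Hmax; lia.
  - exists (lo + m)%nat; split; [lia|]. intros j Hj.
    destruct (Nat.eq_dec j (lo + m)) as [->|]; [lra|]. specialize (Hmax j ltac:(lia)); lra.
Qed.

Fixpoint sum_range (f : nat -> R) (b0 c : nat) : R :=
  match c with
  | O => 0
  | S c' => f b0 + sum_range f (S b0) c'
  end.

(* Picking the maximal coordinate of each of the blocks [b0, ..., b0 + c - 1]. *)
Lemma block_maxima_sum t1 t2 m d l : (1 <= m)%nat -> 0 <= t1 <= t2 -> in_cube d l ->
  forall c b0, exists s, StronglySorted lt s /\ List.length s = c /\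
    List.Forall (fun j => (b0 * m <= j < (b0 + c) * m)%nat) s /\
    sum_range (fun b => block_score t1 t2 m b l) b0 c <= sum_at l s.
Proof.
  intros Hm Ht Hl c. induction c as [|c IHc]; intros b0.
  - exists nil; repeat split; simpl; auto; [constructor|unfold sum_at; simpl; lra].
  - destruct (IHc (S b0)) as [s [Hs [Hlen [Hrange Hsum]]]].
    destruct (argmax_range (fun j => nth j l 0) (b0 * m) m Hm) as [i [Hi Hmax]].
    rewrite Forall_forall in Hrange.
    exists (i :: s). repeat split.
    + constructor; auto. rewrite Forall_forall. intros j Hj. specialize (Hrange j Hj). lia.
    + simpl; auto.
    + constructor; [nia|]. rewrite Forall_forall. intros j Hj. specialize (Hrange j Hj). nia.
    + simpl sum_range. unfold sum_at; simpl; fold (sum_at l s).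
      assert (block_score t1 t2 m b0 l <= nth i l 0).
      { apply (block_score_le_max _ _ _ _ d); auto.
        intros j Hj. apply in_block_spec in Hj. apply Hmax; lia. }
      lra.
Qed.

Lemma sum_block_scores_le_topk_max t1 t2 m d k l : (1 <= m)%nat -> (k * m <= d)%nat ->
  0 <= t1 <= t2 -> in_cube d l ->
  sum_range (fun b => block_score t1 t2 m b l) 0 k <= topk_max d k l.
Proof.
  intros Hm Hkm Ht Hl.
  destruct (block_maxima_sum t1 t2 m d l Hm Ht Hl k 0) as [s [Hs [Hlen [Hrange Hsum]]]].
  eapply Rle_trans; [exact Hsum|]. apply sum_at_le_topk_max; auto.
  eapply Forall_impl; [|exact Hrange]. simpl; lia.
Qed.

Lemma rpow_of_pos x a : 0 < x -> rpow x a = Rpower x a.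
Proof. intros H; unfold rpow; destruct (Req_EM_T x 0); [lra|auto]. Qed.

Lemma rpow_0_l a : 0 < a -> rpow 0 a = 0.
Proof.
  intros H; unfold rpow; destruct (Req_EM_T 0 0); [|lra]. destruct (Req_EM_T a 0); [lra|auto].
Qed.

Lemma rpow_0_r x : rpow x 0 = 1.
Proof.
  unfold rpow; destruct (Req_EM_T x 0); [destruct (Req_EM_T 0 0); lra|].
  unfold Rpower. rewrite Rmult_0_l. apply exp_0.
Qed.

Lemma rpow_nonneg x a : 0 <= rpow x a.
Proof.
  unfold rpow; destruct (Req_EM_T x 0); [destruct (Req_EM_T a 0); lra|].
  left; apply exp_pos.
Qed.

Lemma continuity_pt_nonexpansive f x : (forall y z, Rabs (f y - f z) <= Rabs (y - z)) ->
  continuity_pt f x.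
Proof.
  intros H. unfold continuity_pt, continue_in, limit1_in, limit_in; simpl; unfold R_dist.
  intros eps Heps. exists eps; split; auto. intros z [_ Hz].
  eapply Rle_lt_trans; [apply H|exact Hz].
Qed.

Lemma rpow_clamp_continuous a y : 0 <= a -> continuity_pt (fun z => rpow (clamp z) a) y.
Proof.
  intros Ha. destruct (Req_dec a 0) as [->|Ha0].
  { apply continuity_pt_ext with (fun _ => 1); [intros; rewrite rpow_0_r; auto|].
    apply continuity_pt_const; intros u v; auto. }
  destruct (clamp_range y) as [Hy0 Hy1]. destruct (Req_dec (clamp y) 0) as [Hy|Hy].
  - unfold continuity_pt, continue_in, limit1_in, limit_in; simpl; unfold R_dist.
    intros eps Heps. exists (Rpower (eps / 2) (/ a)). split; [apply exp_pos|].
    intros z [_ Hz]. rewrite Hy, rpow_0_l, Rminus_0_r by lra.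
    assert (Hcz : clamp z < Rpower (eps / 2) (/ a)).
    { pose proof (clamp_lipschitz z y) as K. rewrite Hy, Rminus_0_r, Rabs_right in K
        by apply Rle_ge, clamp_range. lra. }
    destruct (clamp_range z) as [[Hz0|Hz0] _].
    + rewrite rpow_of_pos, Rabs_right by (try apply Rle_ge, Rlt_le, exp_pos; auto).
      apply Rle_lt_trans with (Rpower (Rpower (eps / 2) (/ a)) a); [apply Rle_Rpower_l; lra|].
      rewrite Rpower_mult, Rinv_l, Rpower_1 by lra. lra.
    + rewrite <- Hz0, rpow_0_l, Rabs_R0 by lra. lra.
  - apply (continuity_pt_comp clamp (fun u => rpow u a));
      [apply continuity_pt_nonexpansive, clamp_lipschitz|].
    apply continuity_pt_locally_ext with (fun u => Rpower u a) (clamp y); [lra| |].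
    + intros u Hu. unfold Rdist in Hu. rewrite rpow_of_pos; auto. split_Rabs; lra.
    + apply derivable_continuous_pt. exists (a * Rpower (clamp y) (a - 1)).
      apply derivable_pt_lim_power; lra.
Qed.

Definition beta_kernel (a x : R) : R := rpow x a * rpow (1 - x) a.

Lemma beta_fn_kernel b : beta_fn b = integral (beta_kernel (b - 1)) 0 1.
Proof. reflexivity. Qed.

Lemma beta_density_kernel b x : beta_density b x = / beta_fn b * beta_kernel (b - 1) x.
Proof. unfold beta_density, beta_kernel, Rdiv. ring. Qed.

Lemma beta_kernel_clamp_continuous a y : 0 <= a ->
  continuity_pt (fun z => beta_kernel a (clamp z)) y.
Proof.
  intros Ha. unfold beta_kernel.
  apply continuity_pt_ext with
    (fun z => rpow (clamp z) a * rpow (clamp (1 - clamp z)) a).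
  { intros z. rewrite (clamp_id (1 - clamp z)); [reflexivity|].
    destruct (clamp_range z); unfold unit_interval; lra. }
  apply (continuity_pt_mult (fun z => rpow (clamp z) a)); [apply rpow_clamp_continuous; auto|].
  apply (continuity_pt_comp (fun z => 1 - clamp z) (fun u => rpow (clamp u) a));
    [|apply rpow_clamp_continuous; auto].
  apply continuity_pt_nonexpansive. intros u v.
  replace (1 - clamp u - (1 - clamp v)) with (- (clamp u - clamp v)) by ring.
  rewrite Rabs_Ropp. apply clamp_lipschitz.
Qed.

Lemma beta_kernel_bounds a x : 0 <= a -> unit_interval x ->
  0 <= beta_kernel a x <= Rpower (/ 4) a.
Proof.
  unfold unit_interval. intros Ha Hx. unfold beta_kernel.
  split; [apply Rmult_le_pos; apply rpow_nonneg|].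
  destruct (Req_dec a 0) as [->|Ha0].
  { rewrite !rpow_0_r. unfold Rpower. rewrite Rmult_0_l, exp_0. lra. }
  destruct (Req_dec x 0) as [->|Hx0].
  { rewrite rpow_0_l, Rmult_0_l by lra. left; apply exp_pos. }
  destruct (Req_dec x 1) as [->|Hx1].
  { rewrite Rminus_diag, rpow_0_l, Rmult_0_r by lra. left; apply exp_pos. }
  rewrite !rpow_of_pos, Rpower_mult_distr by lra.
  apply Rle_Rpower_l; [lra|]. split; [nra|]. pose proof (pow2_ge_0 (x - / 2)). nra.
Qed.

Lemma beta_kernel_ge a x v : 0 <= a -> / 2 <= x <= v -> v < 1 ->
  Rpower (v * (1 - v)) a <= beta_kernel a x.
Proof.
  intros Ha Hx Hv. unfold beta_kernel. rewrite !rpow_of_pos, Rpower_mult_distr by lra.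
  apply Rle_Rpower_l; [lra|]. split; nra.
Qed.

Lemma Rpower_quarter_le_1 a : 0 <= a -> Rpower (/ 4) a <= 1.
Proof.
  intros Ha. unfold Rpower. rewrite <- exp_0.
  assert (ln (/ 4) < 0) by (rewrite <- ln_1; apply ln_increasing; lra).
  destruct Ha as [Ha| <-]; [left; apply exp_increasing; nra|rewrite Rmult_0_l; lra].
Qed.

Lemma uc01_beta_kernel a : 0 <= a -> uc01 (beta_kernel a).
Proof.
  intros Ha. apply uc01_of_continuous with 1.
  - intros y; apply beta_kernel_clamp_continuous; auto.
  - intros x Hx. destruct (beta_kernel_bounds a x Ha Hx).
    pose proof (Rpower_quarter_le_1 a Ha). rewrite Rabs_right; lra.
Qed.

Lemma RInt_ge_const f u v c : ex_RInt f u v -> u <= v ->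
  (forall x, u <= x <= v -> c <= f x) -> c * (v - u) <= RInt f u v.
Proof.
  intros Hf Huv H.
  assert (K : RInt (fun _ => c) u v <= RInt f u v).
  { apply RInt_le; auto; [apply ex_RInt_const|]. intros; apply H; lra. }
  rewrite RInt_const in K. unfold scal in K; simpl in K; unfold mult in K; simpl in K. lra.
Qed.

Lemma RInt_subinterval_le f a b u v : ex_RInt f a b -> a <= u <= v -> v <= b ->
  (forall x, a <= x <= b -> 0 <= f x) -> RInt f u v <= RInt f a b.
Proof.
  intros Hf Huv Hvb Hpos.
  assert (Eau : ex_RInt f a u) by (apply (ex_RInt_Chasles_1 f a u b); auto; lra).
  assert (Eub : ex_RInt f u b) by (apply (ex_RInt_Chasles_2 f a u b); auto; lra).
  assert (Euv : ex_RInt f u v) by (apply (ex_RInt_Chasles_1 f u v b); auto; lra).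
  assert (Evb : ex_RInt f v b) by (apply (ex_RInt_Chasles_2 f u v b); auto; lra).
  rewrite <- (RInt_Chasles f a u b), <- (RInt_Chasles f u v b) by auto.
  assert (0 <= RInt f a u) by (apply RInt_ge_0; auto; try lra; intros; apply Hpos; lra).
  assert (0 <= RInt f v b) by (apply RInt_ge_0; auto; try lra; intros; apply Hpos; lra).
  simpl; unfold plus; simpl. lra.
Qed.

Lemma beta_fn_bounds b : 1 <= b -> 0 < beta_fn b <= Rpower (/ 4) (b - 1).
Proof.
  intros Hb. assert (Ha : 0 <= b - 1) by lra.
  pose proof (uc01_ex_RInt _ (uc01_beta_kernel _ Ha)) as E.
  rewrite beta_fn_kernel, integral_RInt by auto. split.
  - apply Rlt_le_trans with (RInt (beta_kernel (b - 1)) (/ 2) (19 / 20)).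
    + eapply Rlt_le_trans;
        [|apply (RInt_ge_const _ _ _ (Rpower (19 / 20 * (1 - 19 / 20)) (b - 1)))].
      * pose proof (exp_pos ((b - 1) * ln (19 / 20 * (1 - 19 / 20)))). unfold Rpower. nra.
      * apply (ex_RInt_Chasles_1 (beta_kernel (b - 1)) _ _ 1); [lra|].
        apply (ex_RInt_Chasles_2 (beta_kernel (b - 1)) 0); [lra|auto].
      * lra.
      * intros x Hx; apply beta_kernel_ge; auto; lra.
    + apply RInt_subinterval_le; auto; try lra.
      intros x Hx; apply beta_kernel_bounds; auto.
  - assert (K : RInt (beta_kernel (b - 1)) 0 1 <= RInt (fun _ => Rpower (/ 4) (b - 1)) 0 1).
    { apply RInt_le; auto; [lra|apply ex_RInt_const|].
      intros x Hx; apply beta_kernel_bounds; unfold unit_interval; auto; lra. }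
    rewrite RInt_const in K. unfold scal in K; simpl in K; unfold mult in K; simpl in K. lra.
Qed.

Lemma uc01_beta_density b : 1 <= b -> uc01 (beta_density b).
Proof.
  intros Hb. apply bounded_uc_ext with (fun x => / beta_fn b * beta_kernel (b - 1) x).
  { intros x _; rewrite beta_density_kernel; auto. }
  apply uc01_scal, uc01_beta_kernel; lra.
Qed.

Lemma beta_density_nonneg b x : 1 <= b -> unit_interval x -> 0 <= beta_density b x.
Proof.
  intros Hb Hx. rewrite beta_density_kernel. destruct (beta_fn_bounds b Hb).
  apply Rmult_le_pos; [left; apply Rinv_0_lt_compat; auto|]. apply beta_kernel_bounds; auto; lra.
Qed.

Lemma integral_beta_density b : 1 <= b -> integral (beta_density b) 0 1 = 1.
Proof.
  intros Hb. destruct (beta_fn_bounds b Hb) as [HB _].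
  rewrite (integral_ext _ (fun x => / beta_fn b * beta_kernel (b - 1) x))
    by (try lra; intros; apply beta_density_kernel).
  rewrite integral_scal, <- beta_fn_kernel by (apply uc01_ex_RInt, uc01_beta_kernel; lra).
  field. lra.
Qed.

Lemma exp_pow x n : exp x ^ n = exp (INR n * x).
Proof.
  induction n as [|n IHn]; simpl pow; [simpl; rewrite Rmult_0_l, exp_0; auto|].
  rewrite S_INR, IHn, <- exp_plus. f_equal; ring.
Qed.

Lemma exp_ge_pow x n : 0 <= x -> (0 < n)%nat -> (1 + x / INR n) ^ n <= exp x.
Proof.
  intros Hx Hn. assert (HnR : 0 < INR n) by (apply lt_0_INR; auto).
  replace (exp x) with (exp (x / INR n) ^ n) by (rewrite exp_pow; f_equal; field; lra).
  apply pow_incr. split; [apply Rplus_le_le_0_compat; [lra|apply Rdiv_le_0_compat; lra]|].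
  apply exp_ineq1_le.
Qed.

Lemma ln_19_100_ge : -2 <= ln (19 / 100).
Proof.
  rewrite <- (ln_exp (-2)). apply ln_le; [apply exp_pos|].
  pose proof (exp_ge_pow 2 8 ltac:(lra) ltac:(lia)) as K.
  replace (INR 8) with 8 in K by (simpl; ring).
  assert (E : exp (-2) * exp 2 = 1)
    by (rewrite <- exp_plus; replace (-2 + 2) with 0 by ring; apply exp_0).
  pose proof (exp_pos (-2)). simpl in K. nra.
Qed.

Lemma exp_le_mono x y : x <= y -> exp x <= exp y.
Proof. intros [H| ->]; [left; apply exp_increasing; auto|lra]. Qed.

(* The kernel lies between [(19/400)^a] on [1/2, 19/20] and [(1/4)^a] everywhere,
   and [(19/100)^a >= exp (-2 a)]. *)
Lemma beta_density_ge b x : 1 <= b -> / 2 <= x <= 19 / 20 ->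
  exp (-2 * (b - 1)) <= beta_density b x.
Proof.
  intros Hb Hx. set (a := b - 1). assert (Ha : 0 <= a) by (unfold a; lra).
  destruct (beta_fn_bounds b Hb) as [HB0 HB]. fold a in HB.
  rewrite beta_density_kernel. fold a.
  pose proof (beta_kernel_ge a x (19 / 20) Ha Hx ltac:(lra)) as Hk.
  apply Rle_trans with (/ Rpower (/ 4) a * Rpower (19 / 20 * (1 - 19 / 20)) a).
  - replace (19 / 20 * (1 - 19 / 20)) with (19 / 100 * / 4) by field.
    rewrite <- Rpower_mult_distr, (Rmult_comm (Rpower (19 / 100) a)), <- Rmult_assoc, Rinv_l,
      Rmult_1_l by (lra || apply Rgt_not_eq, exp_pos).
    apply exp_le_mono. pose proof ln_19_100_ge. nra.
  - apply Rmult_le_compat; [left; apply Rinv_0_lt_compat, exp_pos|left; apply exp_pos| |auto].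
    apply Rinv_le_contravar; auto.
Qed.

Lemma integral_ramp_beta_density_ge b t : 1 <= b -> / 2 <= t + / 100 <= 19 / 20 ->
  (19 / 20 - (t + / 100)) * exp (-2 * (b - 1)) <=
  integral (fun x => ramp t x * beta_density b x) 0 1.
Proof.
  intros Hb Ht.
  assert (E : ex_RInt (fun x => ramp t x * beta_density b x) 0 1)
    by (apply uc01_ex_RInt, uc01_mult; [apply uc01_ramp|apply uc01_beta_density; auto]).
  rewrite integral_RInt by auto.
  apply Rle_trans with (RInt (fun x => ramp t x * beta_density b x) (t + / 100) (19 / 20)).
  - rewrite Rmult_comm. apply RInt_ge_const; [|lra|].
    + apply (ex_RInt_Chasles_1 (fun x => ramp t x * beta_density b x) _ _ 1); [lra|].
      apply (ex_RInt_Chasles_2 (fun x => ramp t x * beta_density b x) 0); [lra|auto].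
    + intros x Hx. rewrite ramp_above, Rmult_1_l by lra. apply beta_density_ge; lra.
  - apply RInt_subinterval_le; auto; try lra. intros x Hx.
    apply Rmult_le_pos; [apply ramp_range|apply beta_density_nonneg; auto].
Qed.

Lemma sum_range_mult_r f b0 c x : sum_range f b0 c * x = sum_range (fun b => f b * x) b0 c.
Proof. revert b0; induction c; intros b0; simpl; [ring|]. rewrite <- IHc. ring. Qed.

Lemma sum_range_const f b0 c v : (forall b, (b0 <= b < b0 + c)%nat -> f b = v) ->
  sum_range f b0 c = INR c * v.
Proof.
  revert b0; induction c as [|c IHc]; intros b0 H; simpl sum_range; [simpl; ring|].
  rewrite (IHc (S b0)) by (intros; apply H; lia). rewrite H, S_INR by lia. ring.
Qed.

Lemma uc_cube_sum_range n F b0 c : (forall b, uc_cube n (F b)) ->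
  uc_cube n (fun l => sum_range (fun b => F b l) b0 c).
Proof.
  revert b0; induction c; intros b0 H; simpl; [apply bounded_uc_const|].
  apply uc_cube_plus; auto.
Qed.

Lemma iint_sum_range n F b0 c : (forall b, uc_cube n (F b)) ->
  iint n (fun l => sum_range (fun b => F b l) b0 c) = sum_range (fun b => iint n (F b)) b0 c.
Proof.
  revert b0; induction c; intros b0 H; simpl; [apply iint_const|].
  rewrite iint_plus, IHc; auto. apply uc_cube_sum_range; auto.
Qed.

Definition density_prod (b : R) : list R -> R := coord_prod (fun _ => beta_density b).

Definition ramp_mass (b t : R) : R := integral (fun x => ramp t x * beta_density b x) 0 1.

Section BlockExpectation.

Variables (b : R) (d m : nat).
Hypothesis Hb : 1 <= b.

Lemma uc01_ramp_density t : uc01 (fun x => ramp t x * beta_density b x).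
Proof. apply uc01_mult; [apply uc01_ramp|apply uc01_beta_density; auto]. Qed.

Lemma uc01_ramp_compl_density t : uc01 (fun x => (1 - ramp t x) * beta_density b x).
Proof.
  apply bounded_uc_ext with (fun x => beta_density b x + -1 * (ramp t x * beta_density b x)).
  { intros; ring. }
  apply uc01_plus; [apply uc01_beta_density; auto|apply uc01_scal, uc01_ramp_density].
Qed.

Lemma integral_ramp_compl_density t :
  integral (fun x => (1 - ramp t x) * beta_density b x) 0 1 = 1 - ramp_mass b t.
Proof.
  rewrite (integral_ext _ (fun x => beta_density b x + -1 * (ramp t x * beta_density b x)))
    by (try lra; intros; ring).
  rewrite integral_plus, integral_scal, integral_beta_density; auto; try apply uc01_ex_RInt.
  - unfold ramp_mass; ring.
  - apply uc01_ramp_density.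
  - apply uc01_beta_density; auto.
  - apply uc01_scal, uc01_ramp_density.
Qed.

Definition block_density (t : R) (blk : nat) : list R -> R :=
  coord_prod (fun i x => if in_block m blk i then (1 - ramp t x) * beta_density b x
                         else beta_density b x).

Lemma block_hit_mult_density t blk l :
  block_hit t m blk l * density_prod b l = density_prod b l + -1 * block_density t blk l.
Proof.
  unfold block_hit, density_prod, block_density.
  rewrite Rmult_minus_distr_r, Rmult_1_l, coord_prod_mult.
  rewrite (coord_prod_ext
    (fun i x => (if in_block m blk i then 1 - ramp t x else 1) * beta_density b x)
    (fun i x => if in_block m blk i then (1 - ramp t x) * beta_density b x
                else beta_density b x)); [ring|].
  intros i x. destruct (in_block m blk i); ring.
Qed.

Lemma uc_cube_block_density t blk : uc_cube d (block_density t blk).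
Proof.
  apply uc_cube_coord_prod. intros i. destruct (in_block m blk i).
  - apply uc01_ramp_compl_density.
  - apply uc01_beta_density; auto.
Qed.

Lemma uc_cube_density_prod : uc_cube d (density_prod b).
Proof. apply uc_cube_coord_prod. intros; apply uc01_beta_density; auto. Qed.

Lemma uc_cube_block_hit_density t blk :
  uc_cube d (fun l => block_hit t m blk l * density_prod b l).
Proof.
  apply bounded_uc_ext with (fun l => density_prod b l + -1 * block_density t blk l).
  { intros l _; symmetry; apply block_hit_mult_density. }
  apply uc_cube_plus; [apply uc_cube_density_prod|apply uc_cube_scal, uc_cube_block_density].
Qed.

Lemma uc_cube_block_score t1 t2 blk :
  uc_cube d (fun l => block_score t1 t2 m blk l * density_prod b l).
Proof.
  apply bounded_uc_ext with (fun l =>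
    t1 * (block_hit t1 m blk l * density_prod b l) +
    (t2 - t1) * (block_hit t2 m blk l * density_prod b l)).
  { intros l _; unfold block_score; ring. }
  apply uc_cube_plus; apply uc_cube_scal, uc_cube_block_hit_density.
Qed.

Lemma iint_density_prod : iint d (density_prod b) = 1.
Proof.
  unfold density_prod. rewrite iint_coord_prod by (intros; apply uc01_beta_density; auto).
  apply prod_upto_1; intros; apply integral_beta_density; auto.
Qed.

Lemma iint_block_density t blk : (blk * m + m <= d)%nat ->
  iint d (block_density t blk) = (1 - ramp_mass b t) ^ m.
Proof.
  intros Hblk. unfold block_density. rewrite iint_coord_prod.
  - rewrite <- (prod_upto_range_indicator (1 - ramp_mass b t) (blk * m) m d Hblk).
    apply prod_upto_ext; intros i. unfold in_block.
    destruct (andb _ _); [apply integral_ramp_compl_density|apply integral_beta_density; auto].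
  - intros i; destruct (in_block m blk i);
      [apply uc01_ramp_compl_density|apply uc01_beta_density; auto].
Qed.

Lemma iint_block_hit_density t blk : (blk * m + m <= d)%nat ->
  iint d (fun l => block_hit t m blk l * density_prod b l) = 1 - (1 - ramp_mass b t) ^ m.
Proof.
  intros Hblk.
  rewrite (iint_ext _ _ (fun l => density_prod b l + -1 * block_density t blk l))
    by (intros; apply block_hit_mult_density).
  rewrite iint_plus, iint_scal, iint_density_prod, iint_block_density; auto.
  - ring.
  - apply uc_cube_block_density.
  - apply uc_cube_density_prod.
  - apply uc_cube_scal, uc_cube_block_density.
Qed.

Lemma iint_block_score t1 t2 blk : (blk * m + m <= d)%nat ->
  iint d (fun l => block_score t1 t2 m blk l * density_prod b l) =
  t1 * (1 - (1 - ramp_mass b t1) ^ m) + (t2 - t1) * (1 - (1 - ramp_mass b t2) ^ m).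
Proof.
  intros Hblk.
  rewrite (iint_ext _ _ (fun l => t1 * (block_hit t1 m blk l * density_prod b l) +
                                  (t2 - t1) * (block_hit t2 m blk l * density_prod b l)))
    by (intros; unfold block_score; ring).
  rewrite iint_plus, !iint_scal, !iint_block_hit_density; auto;
    try apply uc_cube_scal; apply uc_cube_block_hit_density.
Qed.

Lemma E_beta_topk_max_ge k t1 t2 : (1 <= m)%nat -> (1 <= k)%nat -> (k * m <= d)%nat ->
  0 <= t1 <= t2 ->
  INR k * (t1 * (1 - (1 - ramp_mass b t1) ^ m) + (t2 - t1) * (1 - (1 - ramp_mass b t2) ^ m))
  <= E_beta b d (topk_max d k).
Proof.
  intros Hm Hk Hkm Ht. unfold E_beta.
  rewrite (iint_ext _ _ (fun l => topk_max d k l * density_prod b l))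
    by (intros; rewrite fold_right_map_Rmult; reflexivity).
  rewrite <- (sum_range_const
                (fun blk => iint d (fun l => block_score t1 t2 m blk l * density_prod b l)) 0 k)
    by (intros; apply iint_block_score; nia).
  rewrite <- iint_sum_range by (intros; apply uc_cube_block_score).
  apply iint_le.
  - apply uc_cube_sum_range; intros; apply uc_cube_block_score.
  - apply uc_cube_mult; [apply uc_cube_topk_max; auto|apply uc_cube_density_prod].
  - intros l Hl. rewrite <- sum_range_mult_r. apply Rmult_le_compat_r.
    + apply coord_prod_nonneg; [intros; apply beta_density_nonneg; auto|apply Hl].
    + apply sum_block_scores_le_topk_max; auto.
Qed.

End BlockExpectation.

Lemma pow_one_minus_le_exp q n : 0 <= 1 - q -> (1 - q) ^ n <= exp (- (INR n * q)).
Proof.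
  intros H. apply Rle_trans with (exp (- q) ^ n).
  - apply pow_incr. split; [exact H|]. pose proof (exp_ineq1_le (- q)). lra.
  - rewrite exp_pow. right; f_equal; ring.
Qed.

Lemma exp_neg_mult_pow_le x : 0 <= x -> exp (- x) * (1 + x / 8) ^ 8 <= 1.
Proof.
  intros Hx. pose proof (exp_ge_pow x 8 Hx ltac:(lia)) as K.
  replace (INR 8) with 8 in K by (simpl; ring).
  assert (E : exp (- x) * exp x = 1)
    by (rewrite <- exp_plus; replace (- x + x) with 0 by ring; apply exp_0).
  pose proof (exp_pos (- x)). nra.
Qed.

Lemma ramp_mass_le_1 b t : 1 <= b -> ramp_mass b t <= 1.
Proof.
  intros Hb. pose proof (integral_ramp_compl_density b Hb t).
  enough (0 <= integral (fun x => (1 - ramp t x) * beta_density b x) 0 1) by lra.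
  apply Rle_trans with (integral (fun _ => 0) 0 1); [rewrite integral_const; lra|].
  apply integral_le; [lra|apply ex_RInt_const|apply uc01_ex_RInt, uc01_ramp_compl_density; auto|].
  intros x Hx. apply Rmult_le_pos; [destruct (ramp_range t x)|apply beta_density_nonneg]; auto; lra.
Qed.

Lemma ramp_mass_miss_le b t m : 1 <= b -> / 2 <= t + / 100 <= 19 / 20 ->
  15 * exp (2 * (b - 1)) <= INR m ->
  (1 - ramp_mass b t) ^ m <= exp (- (15 * (19 / 20 - (t + / 100)))).
Proof.
  intros Hb Ht Hm. pose proof (ramp_mass_le_1 b t Hb).
  eapply Rle_trans; [apply pow_one_minus_le_exp; lra|]. apply exp_le_mono.
  pose proof (integral_ramp_beta_density_ge b t Hb Ht) as Hq. fold (ramp_mass b t) in Hq.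
  assert (E : exp (2 * (b - 1)) * exp (-2 * (b - 1)) = 1)
    by (rewrite <- exp_plus; replace (2 * (b - 1) + -2 * (b - 1)) with 0 by ring; apply exp_0).
  pose proof (exp_pos (2 * (b - 1))). pose proof (exp_pos (-2 * (b - 1))).
  assert (0 <= ramp_mass b t) by nra.
  assert (15 * exp (2 * (b - 1)) * ramp_mass b t <= INR m * ramp_mass b t)
    by (apply Rmult_le_compat_r; auto).
  assert (15 * (19 / 20 - (t + / 100)) <= 15 * exp (2 * (b - 1)) * ramp_mass b t) by nra.
  lra.
Qed.

(* With blocks of size [m >= 15 exp (2 (b - 1))], the maximum of a block exceeds
   [13/20] and [21/25] with probability about [1 - e^(-4.35)] and [1 - e^(-1.5)]. *)
Lemma block_score_mean_ge b m : 1 <= b -> 15 * exp (2 * (b - 1)) <= INR m ->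
  3 / 4 <= 13 / 20 * (1 - (1 - ramp_mass b (13 / 20)) ^ m) +
           (21 / 25 - 13 / 20) * (1 - (1 - ramp_mass b (21 / 25)) ^ m).
Proof.
  intros Hb Hm.
  pose proof (ramp_mass_miss_le b (13 / 20) m Hb ltac:(lra) Hm) as A1.
  pose proof (ramp_mass_miss_le b (21 / 25) m Hb ltac:(lra) Hm) as A2.
  pose proof (exp_neg_mult_pow_le (15 * (19 / 20 - (13 / 20 + / 100))) ltac:(lra)) as B1.
  pose proof (exp_neg_mult_pow_le (15 * (19 / 20 - (21 / 25 + / 100))) ltac:(lra)) as B2.
  simpl in B1, B2. lra.
Qed.

Lemma exp_le_of_le_half_ln x D : 0 < D -> x <= / 2 * ln D -> exp (2 * x) <= D.
Proof. intros HD Hx. rewrite <- (exp_ln D HD). apply exp_le_mono. lra. Qed.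

Lemma dimension_ge_of_beta_le beta d k :
  0 < INR d / (8 * Rmax (2 * INR k) 28) ->
  beta <= 1 + / 2 * ln (INR d / (8 * Rmax (2 * INR k) 28)) ->
  16 * INR k * exp (2 * (beta - 1)) <= INR d.
Proof.
  intros HD Hbeta. set (M := Rmax (2 * INR k) 28) in *.
  assert (HM : 2 * INR k <= M /\ 28 <= M) by (split; [apply Rmax_l|apply Rmax_r]).
  pose proof (exp_le_of_le_half_ln (beta - 1) _ HD ltac:(lra)) as He.
  apply Rmult_le_compat_r with (r := 8 * M) in He; [|lra].
  unfold Rdiv in He. rewrite Rmult_assoc, Rinv_l, Rmult_1_r in He by lra.
  pose proof (exp_pos (2 * (beta - 1))). nra.
Qed.

Lemma div_ge_of_mult_le d k e : (1 <= k)%nat -> 1 <= e -> 16 * INR k * e <= INR d ->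
  15 * e <= INR (d / k).
Proof.
  intros Hk He Hd. assert (Hk' : 1 <= INR k) by (apply (le_INR 1); auto).
  assert (Hlt : INR d < INR k * (INR (d / k) + 1)).
  { rewrite <- S_INR, <- mult_INR. apply lt_INR.
    pose proof (Nat.div_mod d k ltac:(lia)). pose proof (Nat.mod_upper_bound d k ltac:(lia)). lia. }
  nra.
Qed.

Theorem proposition2p2 (beta : R) (d k : nat) :
  0 < beta ->
  (1 <= k)%nat ->
  0 < INR d / (8 * Rmax (2 * INR k) 28) ->
  1 <= beta ->
  beta <= 1 + / 2 * ln (INR d / (8 * Rmax (2 * INR k) 28)) ->
  E_beta beta d (topk_max d k) >= 3 / 4 * INR k.
Proof.
  intros _ Hk HD Hb Hbeta.
  set (e := exp (2 * (beta - 1))).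
  assert (He : 1 <= e) by (rewrite <- exp_0; apply exp_le_mono; lra).
  assert (Hd : 16 * INR k * e <= INR d) by (apply dimension_ge_of_beta_le; auto).
  set (m := (d / k)%nat).
  assert (Hm : 15 * e <= INR m) by (apply div_ge_of_mult_le; auto).
  assert (Hm1 : (1 <= m)%nat) by (apply INR_le; simpl; lra).
  assert (Hkm : (k * m <= d)%nat) by apply Nat.Div0.mul_div_le.
  apply Rle_ge. rewrite Rmult_comm.
  eapply Rle_trans; [|apply (E_beta_topk_max_ge beta d m Hb k (13 / 20) (21 / 25)); auto; lra].
  apply Rmult_le_compat_l; [apply pos_INR|apply block_score_mean_ge; auto].
Qed.
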